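(* Let $\Sigma_n$ be an empty signature with sorts $S=\{\sigma_1,\dots,\sigma_n\}$, let $\Sigma^n_s$ be the signature with sorts $S$ and a single function symbol $s$ of arity $\sigma_1\to\sigma_1$, let $\mathcal{T}$ be a $\Sigma_n$-theory, and let $\mathcal{T}'$ be the $\Sigma^n_s$-theory axiomatized by $Ax(\mathcal{T})\cup\{\forall x.\,s(x)=x\}$, where $x$ is a variable of sort $\sigma_1$. Then $\mathcal{T}$ has the finite model property with respect to $S$ iff $\mathcal{T}'$ has the finite model property with respect to $S$; and $\mathcal{T}$ is stably finite with respect to $S$ iff $\mathcal{T}'$ is stably finite with respect to $S$.
   Context: An empty signature has no function symbols and only equality predicates (interpreted as identity). A $\Sigma$-interpretation is a structure (nonempty domain $\tau^{\mathcal{A}}$ per sort $\tau$) plus values for variables; a $\Sigma$-theory $\mathcal{T}$ is the class of all $\Sigma$-interpretations satisfying a set $Ax(\mathcal{T})$ of closed formulas (its $\mathcal{T}$-interpretations); $\mathcal{T}$-satisfiable means satisfied by some $\mathcal{T}$-interpretation. Finite model property w.r.t. $S$: every $\mathcal{T}$-satisfiable quantifier-free formula is satisfied by a $\mathcal{T}$-interpretation $\mathcal{A}$ with $\tau^{\mathcal{A}}$ finite for each $\tau\in S$. Stably finite w.r.t. $S$: for every quantifier-free $\phi$ and $\mathcal{T}$-interpretation $\mathcal{A}$ satisfying $\phi$, some $\mathcal{T}$-interpretation $\mathcal{B}$ satisfies $\phi$ with $|\tau^{\mathcal{B}}|$ finite and $|\tau^{\mathcal{B}}|\le|\tau^{\mathcal{A}}|$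 for each $\tau\in S$. *)

From mathcomp Require Import all_boot.

(** The only predicate
    symbol is equality (interpreted as identity). *)
Record signature := Signature {
  sort : Type;
  sort_dec : forall a b : sort, {a = b} + {a <> b};
  fsym : Type;
  farity : fsym -> seq sort;
  fcod : fsym -> sort }.

Inductive term (S : signature) : sort S -> Type :=
| Var : forall t : sort S, nat -> term S t
| App : forall f : fsym S, terms S (@farity S f) -> term S (@fcod S f)
with terms (S : signature) : seq (sort S) -> Type :=
| TNil : terms S [::]
| TCons : forall (t : sort S) (l : seq (sort S)), term S t -> terms S l -> terms S (t :: l).
Arguments sort_dec {s} a b.
Arguments farity {s} f.
Arguments fcod {s} f.
Arguments Var {S} t _.
Arguments App {S} f _.
Arguments TNil {S}.
Arguments TCons {S t l} _ _.

Inductive formula (S : signature) : Type :=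
| FTrue : formula S
| FFalse : formula S
| FEq : forall t : sort S, term S t -> term S t -> formula S
| FNot : formula S -> formula S
| FAnd : formula S -> formula S -> formula S
| FOr : formula S -> formula S -> formula S
| FImp : formula S -> formula S -> formula S
| FAll : sort S -> nat -> formula S -> formula S
| FEx : sort S -> nat -> formula S -> formula S.
Arguments FTrue {S}.
Arguments FFalse {S}.
Arguments FEq {S} t _ _.
Arguments FNot {S} _.
Arguments FAnd {S} _ _.
Arguments FOr {S} _ _.
Arguments FImp {S} _ _.
Arguments FAll {S} _ _ _.
Arguments FEx {S} _ _ _.

Set Implicit Arguments.
Unset Strict Implicit.
Unset Printing Implicit Defensive.

Fixpoint qfree (S : signature) (p : formula S) : bool :=
  match p with
  | FTrue | FFalse | FEq _ _ _ => true
  | FNot q => qfree q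
  | FAnd q r | FOr q r | FImp q r => qfree q && qfree r
  | FAll _ _ _ | FEx _ _ _ => false
  end.

Fixpoint term_has_var (S : signature) (s : sort S) (x : nat) (t0 : sort S)
  (t : term S t0) {struct t} : bool :=
  match t with
  | Var t1 y => (if sort_dec t1 s then true else false) && (y == x)
  | App f ts => terms_has_var s x ts
  end
with terms_has_var (S : signature) (s : sort S) (x : nat) (l : seq (sort S))
  (ts : terms S l) {struct ts} : bool :=
  match ts with
  | TNil => false
  | TCons _ _ t ts' => term_has_var s x t || terms_has_var s x ts'
  end.

Fixpoint free_in (S : signature) (s : sort S) (x : nat) (p : formula S) : bool :=
  match p with
  | FTrue | FFalse => false
  | FEq _ t1 t2 => term_has_var s x t1 || term_has_var s x t2
  | FNot q => free_in s x q
  | FAnd q r | FOr q r | FImp q r => free_in s x q || free_in s x r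
  | FAll t y q | FEx t y q =>
      if (if sort_dec t s then true else false) && (y == x) then false
      else free_in s x q
  end.

Definition closed_formula (S : signature) (p : formula S) : Prop :=
  forall (s : sort S) (x : nat), free_in s x p = false.

Fixpoint args (S : signature) (D : sort S -> Type) (l : seq (sort S)) : Type :=
  match l with
  | [::] => unit
  | t :: l' => (D t * args D l')%type
  end.

Record structure (S : signature) := Structure {
  dom : sort S -> Type;
  dom_ne : forall t, inhabited (dom t);
  fint : forall f : fsym S, args dom (farity f) -> dom (fcod f) }.

Record interp (S : signature) := Interp {
  istr : structure S;
  ival : forall t : sort S, nat -> dom istr t }.

Fixpoint eval_term (S : signature) (M : structure S)
  (v : forall t : sort S, nat -> dom M t) (t0 : sort S) (t : term S t0)
  {struct t} : dom M t0 :=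
  match t in term _ t1 return dom M t1 with
  | Var t1 y => v t1 y
  | App f ts => @fint S M f (eval_terms v ts)
  end
with eval_terms (S : signature) (M : structure S)
  (v : forall t : sort S, nat -> dom M t) (l : seq (sort S)) (ts : terms S l)
  {struct ts} : args (dom M) l :=
  match ts in terms _ l1 return args (dom M) l1 with
  | TNil => tt
  | TCons _ _ t ts' => (eval_term v t, eval_terms v ts')
  end.

Definition upd (S : signature) (D : sort S -> Type)
  (v : forall t : sort S, nat -> D t) (s : sort S) (x : nat) (a : D s) :
  forall t : sort S, nat -> D t :=
  fun t y =>
    match sort_dec s t with
    | left e => if y == x then eq_rect s D a t e else v t y
    | right _ => v t y
    end.

Fixpoint sat (S : signature) (M : structure S)
  (v : forall t : sort S, nat -> dom M t) (p : formula S) : Prop :=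
  match p with
  | FTrue => True
  | FFalse => False
  | FEq _ t1 t2 => eval_term v t1 = eval_term v t2
  | FNot q => ~ sat v q
  | FAnd q r => sat v q /\ sat v r
  | FOr q r => sat v q \/ sat v r
  | FImp q r => sat v q -> sat v r
  | FAll s x q => forall a : dom M s, sat (upd v x a) q
  | FEx s x q => exists a : dom M s, sat (upd v x a) q
  end.

Definition satisfies (S : signature) (I : interp S) (p : formula S) : Prop :=
  sat (ival I) p.

Definition is_T_interp (S : signature) (Ax : formula S -> Prop) (I : interp S) :
  Prop := forall p, Ax p -> satisfies I p.

Definition finite_type (T : Type) : Prop :=
  exists (n : nat) (f : 'I_n -> T), forall x : T, exists i, f i = x.

Definition card_le (T U : Type) : Prop := exists f : T -> U, injective f.

Definition has_fmp (S : signature) (Ax : formula S -> Prop) (Ss : sort S -> Prop)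
  : Prop :=
  forall p : formula S, qfree p ->
    (exists A : interp S, is_T_interp Ax A /\ satisfies A p) ->
    exists B : interp S, is_T_interp Ax B /\ satisfies B p /\
      forall t, Ss t -> finite_type (dom (istr B) t).

Definition stably_finite (S : signature) (Ax : formula S -> Prop)
  (Ss : sort S -> Prop) : Prop :=
  forall (p : formula S) (A : interp S), qfree p ->
    is_T_interp Ax A -> satisfies A p ->
    exists B : interp S, is_T_interp Ax B /\ satisfies B p /\
      forall t, Ss t -> finite_type (dom (istr B) t) /\
                        card_le (dom (istr B) t) (dom (istr A) t).

Definition SigE (n : nat) : signature :=
  {| sort := 'I_n;
     sort_dec := fun a b => eq_comparable a b;
     fsym := Empty_set;
     farity := fun f => match f with end;
     fcod := fun f => match f with end |}.

Definition SigS (n : nat) (s1 : 'I_n) : signature :=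
  {| sort := 'I_n;
     sort_dec := fun a b => eq_comparable a b;
     fsym := unit;
     farity := fun _ => [:: s1];
     fcod := fun _ => s1 |}.

Definition emb_term (n : nat) (s1 : 'I_n) (t0 : 'I_n) (t : term (SigE n) t0) :
  term (SigS s1) t0 :=
  match t in term _ t1 return term (SigS s1) t1 with
  | Var t1 y => @Var (SigS s1) t1 y
  | App f _ => match f with end
  end.

Fixpoint emb_form (n : nat) (s1 : 'I_n) (p : formula (SigE n)) :
  formula (SigS s1) :=
  match p with
  | FTrue => @FTrue (SigS s1)
  | FFalse => @FFalse (SigS s1)
  | FEq t a b => @FEq (SigS s1) t (emb_term s1 a) (emb_term s1 b)
  | FNot q => @FNot (SigS s1) (emb_form s1 q)
  | FAnd q r => @FAnd (SigS s1) (emb_form s1 q) (emb_form s1 r)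
  | FOr q r => @FOr (SigS s1) (emb_form s1 q) (emb_form s1 r)
  | FImp q r => @FImp (SigS s1) (emb_form s1 q) (emb_form s1 r)
  | FAll t x q => @FAll (SigS s1) t x (emb_form s1 q)
  | FEx t x q => @FEx (SigS s1) t x (emb_form s1 q)
  end.

Definition ax_id (n : nat) (s1 : 'I_n) : formula (SigS s1) :=
  @FAll (SigS s1) s1 0
    (@FEq (SigS s1) s1
       (@App (SigS s1) tt (@TCons (SigS s1) s1 [::] (@Var (SigS s1) s1 0) (@TNil (SigS s1))))
       (@Var (SigS s1) s1 0)).

Definition AxS (n : nat) (s1 : 'I_n) (Ax : formula (SigE n) -> Prop) :
  formula (SigS s1) -> Prop :=
  fun q => (exists p, Ax p /\ q = emb_form s1 p) \/ q = ax_id s1.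

(** The T'-interpretations are exactly the expansions of T-interpretations
    by the identity [s := id], and expanding or taking reducts leaves every
    domain unchanged.  A T-formula is literally a T'-formula, and a T'-formula
    becomes an equivalent T-formula (in every T'-interpretation) once each
    occurrence of [s] is erased.  Hence each direction of both equivalences
    transfers a witness interpretation along reducts/expansions without
    changing its domains. *)
From mathcomp Require Import all_boot.
From Stdlib Require Import Setoid.
Set Implicit Arguments.
Unset Strict Implicit.

Section Transfer.

Variables (S S' : signature) (Ax : formula S -> Prop) (Ax' : formula S' -> Prop).
Variables (Ss : sort S -> Prop) (Ss' : sort S' -> Prop) (srt : sort S' -> sort S).
Variables (tr : formula S' -> formula S) (down : interp S' -> interp S) (up : interp S -> interp S').

Hypothesis qfree_tr : forall p, qfree p -> qfree (tr p).
Hypothesis down_T_interp : forall A, is_T_interp Ax' A -> is_T_interp Ax (down A).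
Hypothesis up_T_interp : forall B, is_T_interp Ax B -> is_T_interp Ax' (up B).
Hypothesis satisfies_down :
  forall A p, is_T_interp Ax' A -> satisfies A p -> satisfies (down A) (tr p).
Hypothesis satisfies_up :
  forall B p, is_T_interp Ax B -> satisfies B (tr p) -> satisfies (up B) p.
Hypothesis Ss_srt : forall t, Ss' t -> Ss (srt t).
Hypothesis dom_up : forall B t, dom (istr (up B)) t = dom (istr B) (srt t).
Hypothesis dom_down : forall A t, dom (istr (down A)) (srt t) = dom (istr A) t.

Lemma has_fmp_transfer : has_fmp Ax Ss -> has_fmp Ax' Ss'.
Proof.
move=> fmp p qp [A [TA Ap]].
have [|B [TB [Bp finB]]] := fmp (tr p) (qfree_tr qp).
  by exists (down A); split; [exact: down_T_interp | exact: satisfies_down].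
exists (up B); split; first exact: up_T_interp.
split; first exact: satisfies_up.
by move=> t /Ss_srt /finB; rewrite dom_up.
Qed.

Lemma stably_finite_transfer : stably_finite Ax Ss -> stably_finite Ax' Ss'.
Proof.
move=> sfin p A qp TA Ap.
have [B [TB [Bp finB]]] :=
  sfin (tr p) (down A) (qfree_tr qp) (down_T_interp TA) (satisfies_down TA Ap).
exists (up B); split; first exact: up_T_interp.
split; first exact: satisfies_up.
by move=> t /Ss_srt /finB; rewrite dom_up -(dom_down A t).
Qed.

End Transfer.

Scheme term_mind := Induction for term Sort Prop
  with terms_mind := Induction for terms Sort Prop.

Section IdentityExpansion.

Variables (n : nat) (s1 : 'I_n).

Definition reduct (M : structure (SigS s1)) : structure (SigE n) :=
  @Structure (SigE n) (dom M) (@dom_ne _ M) (fun f => match f with end).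

Definition expand_id (N : structure (SigE n)) : structure (SigS s1) :=
  @Structure (SigS s1) (dom N) (@dom_ne _ N) (fun _ a => a.1).

Definition reduct_interp (I : interp (SigS s1)) : interp (SigE n) :=
  @Interp (SigE n) (reduct (istr I)) (ival I).

Definition expand_id_interp (I : interp (SigE n)) : interp (SigS s1) :=
  @Interp (SigS s1) (expand_id (istr I)) (ival I).

Definition terms_head (l : seq 'I_n) (ts : terms (SigE n) l) :
    match l return Type with t :: _ => term (SigE n) t | [::] => unit end :=
  match ts with TNil => tt | TCons _ _ t _ => t end.

Fixpoint strip_term (t0 : 'I_n) (t : term (SigS s1) t0) {struct t} :
    term (SigE n) t0 :=
  match t in term _ t1 return term (SigE n) t1 with
  | Var t1 y => @Var (SigE n) t1 y
  | App f ts => @terms_head [:: s1] (strip_terms ts)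
  end
with strip_terms (l : seq 'I_n) (ts : terms (SigS s1) l) {struct ts} :
    terms (SigE n) l :=
  match ts in terms _ l1 return terms (SigE n) l1 with
  | TNil => @TNil (SigE n)
  | TCons _ _ t ts' => @TCons (SigE n) _ _ (strip_term t) (strip_terms ts')
  end.

Fixpoint strip_form (p : formula (SigS s1)) : formula (SigE n) :=
  match p with
  | FTrue => FTrue
  | FFalse => FFalse
  | FEq t a b => @FEq (SigE n) t (strip_term a) (strip_term b)
  | FNot q => FNot (strip_form q)
  | FAnd q r => FAnd (strip_form q) (strip_form r)
  | FOr q r => FOr (strip_form q) (strip_form r)
  | FImp q r => FImp (strip_form q) (strip_form r)
  | FAll t x q => @FAll (SigE n) t x (strip_form q)
  | FEx t x q => @FEx (SigE n) t x (strip_form q)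
  end.

Lemma qfree_strip p : qfree p -> qfree (strip_form p).
Proof. by elim: p => //= q IHq r IHr /andP[/IHq -> /IHr ->]. Qed.

Lemma qfree_emb p : qfree p -> qfree (emb_form s1 p).
Proof. by elim: p => //= q IHq r IHr /andP[/IHq -> /IHr ->]. Qed.

Lemma strip_emb p : strip_form (emb_form s1 p) = p.
Proof.
have strip_emb_term t0 (t : term (SigE n) t0) : strip_term (emb_term s1 t) = t.
  by case: t => [|[]].
by elim: p => //= [t a b|q ->|q -> r ->|q -> r ->|q -> r ->|t x q ->|t x q ->];
  rewrite ?strip_emb_term.
Qed.

(* [args] computes on the list of sorts only, but at two different signatures
   its values are not convertible for an unknown list. *)
Fixpoint args_SigS (D : 'I_n -> Type) (l : seq 'I_n) :
    @args (SigE n) D l -> @args (SigS s1) D l :=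
  match l with
  | [::] => id
  | t :: l' => fun a => (a.1, @args_SigS D l' a.2)
  end.

Lemma eval_terms_head (N : structure (SigE n)) (w : forall t : 'I_n, nat -> dom N t)
  (l : seq 'I_n) (ts : terms (SigE n) l) :
  match l return terms (SigE n) l -> Prop with
  | [::] => fun _ => True
  | _ :: _ => fun ts => (@eval_terms _ N w _ ts).1 = @eval_term _ N w _ (terms_head ts)
  end ts.
Proof. by case: ts. Qed.

Section SatisfactionTransfer.

Variable M : structure (SigS s1).
Hypothesis s_id : forall a : dom M s1, @fint (SigS s1) M tt (a, tt) = a.

Lemma eval_strip (v : forall t : 'I_n, nat -> dom M t) t0 (t : term (SigS s1) t0) :
  @eval_term _ M v _ t = @eval_term _ (reduct M) v _ (strip_term t).
Proof.
elim t using term_mind with (P0 := fun l ts =>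
  @eval_terms _ M v l ts = args_SigS (@eval_terms _ (reduct M) v l (strip_terms ts))) => //=.
- move=> [] ts ->; rewrite -(@eval_terms_head (reduct M) v _ (strip_terms ts)) /=.
  by case: (eval_terms _ _) => a []; exact: s_id.
- by move=> t1 l t' -> ts' ->.
Qed.

Lemma sat_strip v q : @sat _ M v q <-> @sat _ (reduct M) v (strip_form q).
Proof.
elim: q v => //= [t a b|q IH|q IHq r IHr|q IHq r IHr|q IHq r IHr|t x q IH|t x q IH] v.
- by rewrite !eval_strip.
- by rewrite IH.
- by rewrite IHq IHr.
- by rewrite IHq IHr.
- by rewrite IHq IHr.
- by setoid_rewrite IH.
- by setoid_rewrite IH.
Qed.

End SatisfactionTransfer.

Lemma sat_reduct_expand N v p : @sat _ (reduct (expand_id N)) v p <-> @sat _ N v p.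
Proof.
elim: p v => //= [t a b|q IH|q IHq r IHr|q IHq r IHr|q IHq r IHr|t x q IH|t x q IH] v.
- have eval_var t0 (u : term (SigE n) t0) :
      @eval_term _ (reduct (expand_id N)) v _ u = @eval_term _ N v _ u.
    by case: u => [|[]].
  by rewrite !eval_var.
- by rewrite IH.
- by rewrite IHq IHr.
- by rewrite IHq IHr.
- by rewrite IHq IHr.
- by setoid_rewrite IH.
- by setoid_rewrite IH.
Qed.

Lemma upd_same (D : 'I_n -> Type) (v : forall t : 'I_n, nat -> D t) x (a : D s1) :
  @upd (SigS s1) D v s1 x a s1 x = a.
Proof.
rewrite /upd /=; case: (eq_comparable s1 s1) => [e|//]; rewrite eqxx.
by rewrite (eq_irrelevance e erefl).
Qed.

Variables (Ax : formula (SigE n) -> Prop) (Ss : 'I_n -> Prop).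

Lemma s_id_of_T_interp I :
  is_T_interp (@AxS n s1 Ax) I -> forall a : dom (istr I) s1, @fint (SigS s1) _ tt (a, tt) = a.
Proof. by move=> TI a; have /= := TI _ (or_intror erefl) a; rewrite !upd_same. Qed.

Lemma satisfies_reduct_strip I q :
  is_T_interp (@AxS n s1 Ax) I -> satisfies I q -> satisfies (reduct_interp I) (strip_form q).
Proof. by move=> /s_id_of_T_interp s_id /(sat_strip s_id). Qed.

Lemma satisfies_reduct_emb I p :
  is_T_interp (@AxS n s1 Ax) I -> satisfies I (emb_form s1 p) -> satisfies (reduct_interp I) p.
Proof. by rewrite -{2}(strip_emb p); exact: satisfies_reduct_strip. Qed.

Lemma satisfies_expand_id_strip I q :
  satisfies I (strip_form q) -> satisfies (expand_id_interp I) q.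
Proof. by rewrite /satisfies /= (sat_strip (M := expand_id _)) // sat_reduct_expand. Qed.

Lemma satisfies_expand_id_emb I p :
  satisfies I p -> satisfies (expand_id_interp I) (emb_form s1 p).
Proof. by rewrite -{1}(strip_emb p); exact: satisfies_expand_id_strip. Qed.

Lemma reduct_T_interp I : is_T_interp (@AxS n s1 Ax) I -> is_T_interp Ax (reduct_interp I).
Proof.
by move=> TI p Axp; apply: satisfies_reduct_emb => //; apply: TI; left; exists p.
Qed.

Lemma expand_id_T_interp I : is_T_interp Ax I -> is_T_interp (@AxS n s1 Ax) (expand_id_interp I).
Proof.
move=> TI _ [[p [Axp ->]] | ->]; first exact/satisfies_expand_id_emb/TI.
by move=> a.
Qed.

Lemma has_fmp_expand_id : has_fmp Ax Ss -> has_fmp (@AxS n s1 Ax) Ss.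
Proof.
exact: (has_fmp_transfer (S := SigE n) (S' := SigS s1) (srt := id) qfree_strip
  (@reduct_T_interp) (@expand_id_T_interp) (@satisfies_reduct_strip)
  (fun I q _ => @satisfies_expand_id_strip I q) (fun _ => id) (fun _ _ => erefl)).
Qed.

Lemma stably_finite_expand_id : stably_finite Ax Ss -> stably_finite (@AxS n s1 Ax) Ss.
Proof.
exact: (stably_finite_transfer (S := SigE n) (S' := SigS s1) (srt := id) qfree_strip
  (@reduct_T_interp) (@expand_id_T_interp) (@satisfies_reduct_strip)
  (fun I q _ => @satisfies_expand_id_strip I q) (fun _ => id) (fun _ _ => erefl)
  (fun _ _ => erefl)).
Qed.

Lemma has_fmp_reduct : has_fmp (@AxS n s1 Ax) Ss -> has_fmp Ax Ss.
Proof.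
exact: (has_fmp_transfer (S := SigS s1) (S' := SigE n) (srt := id) qfree_emb
  (@expand_id_T_interp) (@reduct_T_interp) (fun I p _ => @satisfies_expand_id_emb I p)
  (@satisfies_reduct_emb) (fun _ => id) (fun _ _ => erefl)).
Qed.

Lemma stably_finite_reduct : stably_finite (@AxS n s1 Ax) Ss -> stably_finite Ax Ss.
Proof.
exact: (stably_finite_transfer (S := SigS s1) (S' := SigE n) (srt := id) qfree_emb
  (@expand_id_T_interp) (@reduct_T_interp) (fun I p _ => @satisfies_expand_id_emb I p)
  (@satisfies_reduct_emb) (fun _ => id) (fun _ _ => erefl) (fun _ _ => erefl)).
Qed.

End IdentityExpansion.

Theorem theorem9 (n : nat) (hn : 0 < n) (Ax : formula (SigE n) -> Prop)
  (hAx : forall p, Ax p -> closed_formula p) :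
  (has_fmp Ax (fun _ => True) <->
     has_fmp (@AxS n (Ordinal hn) Ax) (fun _ => True)) /\
  (stably_finite Ax (fun _ => True) <->
     stably_finite (@AxS n (Ordinal hn) Ax) (fun _ => True)).
Proof.
split; split.
- exact: has_fmp_expand_id.
- exact: has_fmp_reduct.
- exact: stably_finite_expand_id.
- exact: stably_finite_reduct.
Qed.
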